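(* Let $\Lambda=[\lambda_{\min},\lambda_{\max}]\subset[0,\infty)$, $\beta\ge0$, let $\tilde\nu(\lambda,dx)$ be a probability kernel on $(0,\infty)$ with $s_0>0$ such that $\sup_{\lambda\in\Lambda}\int_0^\infty e^{sx}\tilde\nu(\lambda,dx)<\infty$ for $s\in[0,s_0)$, and let $\eta\in\mathbb C$ with $\Re(\eta)=\delta<s_0$. Let $F\in C^2(\Lambda)$ and let $\Pi_{\Delta\lambda}F$ be its PCHIP interpolant (interpolation order $p=2$) or piecewise-linear interpolant ($p=1$) on a grid of maximal step $h$. With $N_{\exp}[F](\lambda)=\lambda\int_0^\infty(e^{\eta x}F(\lambda+\beta x)-F(\lambda))\tilde\nu(\lambda,dx)$ (clamped extension outside $\Lambda$), $$\|N_{\exp}[\Pi_{\Delta\lambda}F]-N_{\exp}[F]\|_{\infty,\Lambda}\le\lambda_{\max}\big(C^*_\delta(\Lambda)+1\big)\|\Pi_{\Delta\lambda}F-F\|_{\infty,\Lambda}=\mathcal O(h^p),$$ uniformly on $\Lambda$, where $C^*_\delta(\Lambda)=\sup_{\lambda\in\Lambda}\int_0^\infty e^{\delta x}\tilde\nu(\lambda,dx)<\infty$.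
   Context: Clamped extension: a function on $\Lambda$ is extended to $[0,\infty)$ by the value at the nearest endpoint of $\Lambda$. PCHIP is the piecewise cubic Hermite interpolant with Fritsch–Carlson slopes (interior slope $m_j=\frac{w_1+w_2}{w_1/d_{j-1}+w_2/d_j}$, $w_1=2h_j+h_{j-1}$, $w_2=h_j+2h_{j-1}$, when consecutive secant slopes $d_{j-1},d_j$ satisfy $d_{j-1}d_j>0$, and $m_j=0$ otherwise). *)

From HB Require Import structures.
From mathcomp Require Import all_boot all_order all_algebra.
From mathcomp Require Import all_classical all_reals all_analysis.
From mathcomp Require Import complex.
Set Implicit Arguments.
Unset Strict Implicit.
Unset Printing Implicit Defensive.
Import Order.TTheory GRing.Theory Num.Theory.
Import numFieldNormedType.Exports.
Local Open Scope ring_scope.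
Local Open Scope classical_set_scope.
Local Open Scope complex_scope.

Section Defs.
Context {R : realType}.

Definition clamp (a b x : R) : R := Num.min (Num.max x a) b.
Definition clampext (a b : R) (G : R -> R) (x : R) : R := G (clamp a b x).

Definition cmod (z : R[i]) : R :=
  Num.sqrt (complex.Re z ^+ 2 + complex.Im z ^+ 2).

(** Complex exponential e^{eta x} = e^{Re(eta) x} (cos(Im(eta) x) + i sin(Im(eta) x)). *)
Definition cexp_lin (eta : R[i]) (x : R) : R[i] :=
  (expR (complex.Re eta * x) * cos (complex.Im eta * x))
    +i* (expR (complex.Re eta * x) * sin (complex.Im eta * x)).

Definition cintegral (mu : measure R R) (D : set R) (f : R -> R[i]) : R[i] :=
  (Rintegral mu D (fun x => complex.Re (f x)))
    +i* (Rintegral mu D (fun x => complex.Im (f x))).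

Definition supnorm (a b : R) (G : R -> R) : \bar R :=
  ereal_sup [set (`|G x|)%:E | x in `[a, b]].
Definition csupnorm (a b : R) (G : R -> R[i]) : \bar R :=
  ereal_sup [set (cmod (G x))%:E | x in `[a, b]].

Definition Nexp (a b beta : R) (eta : R[i]) (nu : R -> measure R R)
    (G : R -> R) (lam : R) : R[i] :=
  lam%:C * cintegral (nu lam) `]0%R, +oo[
    (fun x => cexp_lin eta x * (clampext a b G (lam + beta * x))%:C
              - (clampext a b G lam)%:C).

Definition is_grid (a b : R) (n : nat) (t : nat -> R) : Prop :=
  (0 < n)%N /\ t 0%N = a /\ t n = b /\ (forall j, (j < n)%N -> t j < t j.+1).

Definition hstep (t : nat -> R) (j : nat) : R := t j.+1 - t j.

Definition maxstep (n : nat) (t : nat -> R) : R := \big[Num.max/0]_(j < n) hstep t j.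

(** index j of the cell [t j, t (j+1)] containing x (for x in [a,b]):
    the number of interior nodes t 1, ..., t (n-1) that are <= x. *)
Definition cell (n : nat) (t : nat -> R) (x : R) : nat :=
  (\sum_(1 <= k < n) nat_of_bool (t k <= x)%R)%N.

Definition secant (t : nat -> R) (F : R -> R) (j : nat) : R :=
  (F (t j.+1) - F (t j)) / hstep t j.

(** Fritsch--Carlson interior slope at node j (0 < j < n). *)
Definition fc_interior_slope (t : nat -> R) (F : R -> R) (j : nat) : R :=
  let d0 := secant t F j.-1 in
  let d1 := secant t F j in
  let h0 := hstep t j.-1 in
  let h1 := hstep t j in
  let w1 := 2 * h1 + h0 in
  let w2 := h1 + 2 * h0 in
  if 0 < d0 * d1 then (w1 + w2) / (w1 / d0 + w2 / d1) else 0.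

(** End-point slope (the standard one-sided three-point rule with the
    shape-preserving corrections used by PCHIP implementations, e.g. SciPy):
    h0, d0 belong to the end interval, h1, d1 to its neighbour. *)
Definition fc_end_slope (h0 h1 d0 d1 : R) : R :=
  let m := ((2 * h0 + h1) * d0 - h0 * d1) / (h0 + h1) in
  if Num.sg m != Num.sg d0 then 0
  else if (Num.sg d0 != Num.sg d1) && (3 * `|d0| < `|m|) then 3 * d0
  else m.

Definition pchip_slope (n : nat) (t : nat -> R) (F : R -> R) (j : nat) : R :=
  if n == 1%N then secant t F 0
  else if j == 0%N then
    fc_end_slope (hstep t 0) (hstep t 1) (secant t F 0) (secant t F 1)
  else if j == n then
    fc_end_slope (hstep t n.-1) (hstep t n.-2) (secant t F n.-1) (secant t F n.-2)
  else fc_interior_slope t F j.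

Definition pchip (n : nat) (t : nat -> R) (F : R -> R) (x : R) : R :=
  let j := cell n t x in
  let hj := hstep t j in
  let u := (x - t j) / hj in
  (2 * u ^+ 3 - 3 * u ^+ 2 + 1) * F (t j)
  + (u ^+ 3 - 2 * u ^+ 2 + u) * hj * pchip_slope n t F j
  + (- 2 * u ^+ 3 + 3 * u ^+ 2) * F (t j.+1)
  + (u ^+ 3 - u ^+ 2) * hj * pchip_slope n t F j.+1.

Definition pwlinear (n : nat) (t : nat -> R) (F : R -> R) (x : R) : R :=
  let j := cell n t x in
  F (t j) + (x - t j) / hstep t j * (F (t j.+1) - F (t j)).

End Defs.

Inductive scheme := PiecewiseLinear | PCHIP.

Definition scheme_order (s : scheme) : nat :=
  match s with PiecewiseLinear => 1%N | PCHIP => 2%N end.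

Definition interp {R : realType} (s : scheme) (n : nat) (t : nat -> R) (F : R -> R) : R -> R :=
  match s with PiecewiseLinear => pwlinear n t F | PCHIP => pchip n t F end.

Definition C2_on {R : realType} (a b : R) (F : R -> R) : Prop :=
  exists F1 F2 : R -> R,
    [/\ {within `[a, b], continuous F},
        {within `[a, b], continuous F1},
        {within `[a, b], continuous F2},
        (forall x, x \in `]a, b[ -> is_derive x (1:R) F (F1 x)) &
        (forall x, x \in `]a, b[ -> is_derive x (1:R) F1 (F2 x))].

(* Since the clamped extensions of [Pi F] and [F] are bounded and measurable
   and [x |-> e^(delta x)] is [nu(lam, .)]-integrable, [N_exp] is linear:
   [N_exp[Pi F] - N_exp[F] = N_exp[D]] with [D = Pi F - F].  Pointwise
   [|e^(eta x) D(lam + beta x) - D(lam)| <= |D|_oo (e^(delta x) + 1)], and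
   integrating against the probability [nu(lam, .)] gives
   [lam |D|_oo (C*_delta + 1)]; [C*_delta] is finite by the moment bound at
   [s = max(delta, 0)].
   For the rate, on a cell of length [h_j] the interpolation error is a
   combination, with coefficients in [0, 1], of two first-order Taylor
   remainders ([<= M h^2], [M = sup |F''|]) and [h_j] times the errors of the
   node slopes.  Secants are within [M h] of [F'] at nearby nodes; the
   Fritsch-Carlson mean lies between the two neighbouring secants (or is [0]
   across a sign change, where [F'] is itself small), and the corrected end
   slopes stay within [20 M h].  Hence [|Pi F - F|_oo <= 44 M h^2]. *)

From HB Require Import structures.
From mathcomp Require Import all_boot all_order all_algebra.
From mathcomp Require Import all_classical all_reals all_analysis.
From mathcomp Require Import complex measurable_realfun.
From mathcomp Require Import ring lra zify.
Import Order.TTheory GRing.Theory Num.Theory.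
Import numFieldNormedType.Exports.
Local Open Scope ring_scope.
Local Open Scope classical_set_scope.

Section SlopeAlgebra.
Context {R : realFieldType}.

Lemma sg_neq_ler_normB {a b : R} : Num.sg a != Num.sg b -> `|a| <= `|a - b|.
Proof.
have [a0|a0|->] := ltrgtP a 0; last by rewrite normr0.
- rewrite ltr0_sg // => sgb; have b0 : 0 <= b.
    by rewrite leNgt; apply: contra sgb => /ltr0_sg ->.
  by rewrite ltr0_norm // ler0_norm; lra.
- rewrite gtr0_sg // => sgb; have b0 : b <= 0.
    by rewrite leNgt; apply: contra sgb => /gtr0_sg ->.
  by rewrite gtr0_norm // ger0_norm; lra.
Qed.

Lemma weighted_harmonic_mean_between {w1 w2 d0 d1 : R} :
  0 < w1 -> 0 < w2 -> 0 < d0 * d1 ->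
  ((w1 + w2) / (w1 / d0 + w2 / d1) - d0) * ((w1 + w2) / (w1 / d0 + w2 / d1) - d1) <= 0.
Proof.
move=> w1_gt0 w2_gt0 d_gt0; set v := (w1 + w2) / _.
have d00 : d0 != 0 by apply: contraTneq d_gt0 => ->; rewrite mul0r ltxx.
have d10 : d1 != 0 by apply: contraTneq d_gt0 => ->; rewrite mulr0 ltxx.
set D := w1 * d1 + w2 * d0.
have D0 : D != 0.
  by apply: contraTneq d_gt0 => D0; rewrite -leNgt; move: D0; rewrite /D; nra.
have -> : (v - d0) * (v - d1) = - (w1 * w2 * (d0 * d1)) * ((d1 - d0) ^+ 2 / D ^+ 2).
  by rewrite /v /D; field; rewrite -/D D0 d00 d10.
rewrite mulNr oppr_le0 mulr_ge0 ?divr_ge0 ?sqr_ge0 //.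
by apply/ltW/mulr_gt0 => //; exact: mulr_gt0.
Qed.

Lemma fc_mean_err (w1 w2 d0 d1 g e : R) : 0 < w1 -> 0 < w2 ->
  `|d0 - g| <= e -> `|d1 - g| <= e ->
  `|(if 0 < d0 * d1 then (w1 + w2) / (w1 / d0 + w2 / d1) else 0) - g| <= e.
Proof.
move=> w1_gt0 w2_gt0 /ler_normlP[e1 e2] /ler_normlP[e3 e4].
case: ifP => d_gt0; last by move/negbT: d_gt0; rewrite -leNgt => ?; apply/ler_normlP; split; nra.
have := weighted_harmonic_mean_between w1_gt0 w2_gt0 d_gt0.
set v := (_ / _) => v_between; apply/ler_normlP; split; nra.
Qed.

End SlopeAlgebra.

(* The corrections only replace the three-point slope by [0] or [3 d0], and
   each is triggered by a sign change that forces [d0] itself to be small. *)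
Lemma fc_end_slope_err (R : realType) (h0 h1 d0 d1 g e : R) : 0 < h0 -> 0 < h1 ->
  `|d0 - g| <= e -> `|d1 - g| <= 3 * e ->
  `|fc_end_slope h0 h1 d0 d1 - g| <= 20 * e.
Proof.
move=> h0_gt0 h1_gt0 /ler_normlP[e1 e2] /ler_normlP[e3 e4].
rewrite /fc_end_slope; set m := (_ / _).
have m_d0 : m - d0 = h0 / (h0 + h1) * (d0 - d1) by rewrite /m; field; lra.
have w_ge0 : 0 <= h0 / (h0 + h1) by apply: divr_ge0; lra.
have w_le1 : h0 / (h0 + h1) <= 1 by rewrite ler_pdivrMr; lra.
have d0_d1 : `|d0 - d1| <= 4 * e by apply/ler_normlP; split; lra.
have /ler_normlP[md1 md2] : `|m - d0| <= 4 * e.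
  by rewrite m_d0 normrM ger0_norm // -[4 * e]mul1r; apply: ler_pM.
case: ifP => [sg_m|_].
  rewrite eq_sym in sg_m.
  have /ler_normlP[q1 q2] : `|d0| <= 4 * e.
    have := sg_neq_ler_normB sg_m; rewrite distrC => /le_trans; apply.
    by apply/ler_normlP; split; lra.
  by apply/ler_normlP; split; lra.
case: ifP => [/andP[sg_d _]|_]; last by apply/ler_normlP; split; lra.
have /ler_normlP[q1 q2] := le_trans (sg_neq_ler_normB sg_d) d0_d1.
by apply/ler_normlP; split; lra.
Qed.

Section CellAlgebra.
Context {R : realFieldType}.

Let ler_norm_scale {c x b : R} : 0 <= c <= 1 -> `|x| <= b -> `|c * x| <= b.
Proof.
by move=> /andP[c0 c1] xb; rewrite normrM ger0_norm // (le_trans _ xb) ?ler_piMl.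
Qed.

Lemma hermite_cell_err {u hj y0 y1 g0 m0 m1 Fx r e : R} : 0 <= u <= 1 -> 0 <= hj ->
  `|y1 - y0 - g0 * hj| <= r -> `|Fx - y0 - g0 * (u * hj)| <= r ->
  `|m0 - g0| <= e -> `|m1 - g0| <= e ->
  `|(2 * u ^+ 3 - 3 * u ^+ 2 + 1) * y0 + (u ^+ 3 - 2 * u ^+ 2 + u) * hj * m0
    + (- 2 * u ^+ 3 + 3 * u ^+ 2) * y1 + (u ^+ 3 - u ^+ 2) * hj * m1 - Fx|
   <= 2 * r + 2 * (hj * e).
Proof.
move=> /andP[u0 u1] hj0 r1 r2 e0 e1.
set R1 := y1 - y0 - g0 * hj in r1 *; set R2 := Fx - y0 - g0 * (u * hj) in r2 *.
pose A := u ^+ 2 * (3 - 2 * u); pose B := u * (1 - u) ^+ 2; pose C := u ^+ 2 * (1 - u).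
pose X0 := hj * (m0 - g0); pose X1 := hj * (m1 - g0).
(* The Hermite basis reproduces affine functions, so only the two Taylor
   remainders and the two slope errors survive, with weights in [0, 1]. *)
have -> : (2 * u ^+ 3 - 3 * u ^+ 2 + 1) * y0 + (u ^+ 3 - 2 * u ^+ 2 + u) * hj * m0
    + (- 2 * u ^+ 3 + 3 * u ^+ 2) * y1 + (u ^+ 3 - u ^+ 2) * hj * m1 - Fx
  = A * R1 + B * X0 - C * X1 - R2 by rewrite /A /B /C /X0 /X1 /R1 /R2; ring.
have X0e : `|X0| <= hj * e by rewrite normrM ger0_norm // ler_wpM2l.
have X1e : `|X1| <= hj * e by rewrite normrM ger0_norm // ler_wpM2l.
have uu0 : 0 <= u * u by nra.
have uu1 : u * u <= 1 by nra.
have vv0 : 0 <= (1 - u) * (1 - u) by nra.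
have vv1 : (1 - u) * (1 - u) <= 1 by nra.
have A_R1 : `|A * R1| <= r.
  apply: ler_norm_scale r1; rewrite /A; apply/andP; split.
    by rewrite mulr_ge0 ?sqr_ge0 //; lra.
  rewrite -subr_ge0 (_ : 1 - _ = (1 - u) ^+ 2 * (1 + 2 * u)); last by ring.
  by rewrite mulr_ge0 ?sqr_ge0 //; lra.
have B_X0 : `|B * X0| <= hj * e.
  by apply: ler_norm_scale X0e; rewrite /B expr2; apply/andP; split; nra.
have C_X1 : `|C * X1| <= hj * e.
  by apply: ler_norm_scale X1e; rewrite /C expr2; apply/andP; split; nra.
have := ler_normB (A * R1 + B * X0 - C * X1) R2.
have := ler_normB (A * R1 + B * X0) (C * X1).
have := ler_normD (A * R1) (B * X0).
lra.
Qed.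

Lemma linear_cell_err {u hj y0 y1 g0 Fx r : R} : 0 <= u <= 1 ->
  `|y1 - y0 - g0 * hj| <= r -> `|Fx - y0 - g0 * (u * hj)| <= r ->
  `|y0 + u * (y1 - y0) - Fx| <= 2 * r.
Proof.
move=> u01 r1 r2.
set R1 := y1 - y0 - g0 * hj in r1 *; set R2 := Fx - y0 - g0 * (u * hj) in r2 *.
have -> : y0 + u * (y1 - y0) - Fx = u * R1 - R2 by rewrite /R1 /R2; ring.
have := ler_normB (u * R1) R2; have := ler_norm_scale u01 r1; lra.
Qed.

End CellAlgebra.

Lemma mem_set_itvcc {R : realType} (a b x : R) : (x \in `[a, b]) = (a <= x <= b).
Proof. by rewrite mem_setE in_itv. Qed.

Section DerivativeBound.
Context {R : realType} {a b : R} {G G' : R -> R}.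
Hypothesis G_cont : {within `[a, b], continuous G}.
Hypothesis G_deriv : forall x, x \in `]a, b[ -> is_derive x 1 G (G' x).

Lemma itv_mvt {x y} : x \in `[a, b] -> y \in `[a, b] -> x < y ->
  exists2 c, c \in `[a, b] & G y - G x = G' c * (y - x) /\ x < c < y.
Proof.
rewrite !mem_set_itvcc => /andP[ax xb] /andP[ay yb] xy.
have Gd z : z \in `]x, y[%R -> is_derive z 1 G (G' z).
  rewrite in_itv /= => /andP[xz zy].
  by apply: G_deriv; rewrite mem_setE in_itv /=; apply/andP; split; lra.
have Gc : {within `[x, y], continuous G}.
  by apply: continuous_subspaceW G_cont; apply: subset_itv; rewrite bnd_simp.
have [c] := MVT xy Gd Gc.
rewrite in_itv /= => /andP[xc cy] Gyx; exists c; last by rewrite xc cy.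
by rewrite mem_set_itvcc; apply/andP; split; lra.
Qed.

Context {M : R}.
Hypothesis G'_bound : forall x, x \in `[a, b] -> `|G' x| <= M.

Lemma deriv_bound_lipschitz {x y} : x \in `[a, b] -> y \in `[a, b] ->
  `|G y - G x| <= M * `|y - x|.
Proof.
wlog xy : x y / x <= y.
  move=> wlog_xy xab yab; have [/wlog_xy|/ltW/wlog_xy] := leP x y; first exact.
  by rewrite distrC [`|x - y|]distrC; apply.
move=> xab yab; have [<-|xy'] := eqVneq x y; first by rewrite !subrr normr0 mulr0.
have xy_lt : x < y by rewrite lt_neqAle xy' xy.
have [c cab [-> _]] := itv_mvt xab yab xy_lt.
by rewrite normrM ler_wpM2r ?G'_bound.
Qed.

End DerivativeBound.

Section SecondDerivativeBound.
Context {R : realType} {a b M : R} {F F1 F2 : R -> R}.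
Hypothesis F_cont : {within `[a, b], continuous F}.
Hypothesis F1_cont : {within `[a, b], continuous F1}.
Hypothesis F_deriv : forall x, x \in `]a, b[ -> is_derive x 1 F (F1 x).
Hypothesis F1_deriv : forall x, x \in `]a, b[ -> is_derive x 1 F1 (F2 x).
Hypothesis F2_bound : forall x, x \in `[a, b] -> `|F2 x| <= M.

Lemma secant_deriv_err {x y z} : x \in `[a, b] -> y \in `[a, b] -> z \in `[a, b] ->
  x < y -> `|(F y - F x) / (y - x) - F1 z| <= M * (`|x - z| + `|y - z|).
Proof.
move=> xab yab zab xy.
have [c cab [-> /andP[xc cy]]] := itv_mvt F_cont F_deriv xab yab xy.
rewrite mulfK ?subr_eq0 ?gt_eqF //.
apply: le_trans (deriv_bound_lipschitz F1_cont F1_deriv F2_bound zab cab) _; apply: ler_wpM2l.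
  by have := F2_bound z zab; have := normr_ge0 (F2 z); lra.
have := ler_norm (y - z); have := ler_norm (z - x); rewrite [`|z - x|]distrC.
have := normr_ge0 (x - z); have := normr_ge0 (y - z).
by move=> *; apply/ler_normlP; split; lra.
Qed.

Lemma taylor1_err {x y} : x \in `[a, b] -> y \in `[a, b] ->
  `|F y - F x - F1 x * (y - x)| <= M * (y - x) ^+ 2.
Proof.
move=> xab yab.
have [c cab [cx ->]] : exists2 c, c \in `[a, b] &
    `|c - x| <= `|y - x| /\ F y - F x = F1 c * (y - x).
  have [xy|yx|<-] := ltrgtP x y; last by exists x; rewrite // !subrr normr0 mulr0.
  - have [c cab [Fyx /andP[xc cy]]] := itv_mvt F_cont F_deriv xab yab xy.
    by exists c => //; split; rewrite // gtr0_norm ?subr_gt0 //; lra.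
  - have [c cab [Fxy /andP[yc cx]]] := itv_mvt F_cont F_deriv yab xab yx.
    exists c => //; split; last by rewrite -opprB Fxy -mulrN opprB.
    by rewrite distrC gtr0_norm ?subr_gt0 //; lra.
rewrite -mulrBl normrM -real_normK ?num_real // mulrA.
apply: ler_pM; rewrite ?normr_ge0 //.
apply: le_trans (deriv_bound_lipschitz F1_cont F1_deriv F2_bound xab cab) _.
by rewrite ler_wpM2l //; have := F2_bound x xab; have := normr_ge0 (F2 x); lra.
Qed.

End SecondDerivativeBound.

Lemma bounded_on_itv {R : realType} {a b : R} {G : R -> R} :
  {within `[a, b], continuous G} -> exists B, forall x, x \in `[a, b] -> `|G x| <= B.
Proof.
move=> G_cont; have [ab|ba] := leP a b; last first.
  by exists 0 => x; rewrite mem_set_itvcc => /andP[ax xb]; lra.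
have [cM _ GM] := EVT_max ab G_cont; have [cm _ Gm] := EVT_min ab G_cont.
exists (`|G cM| + `|G cm|) => x xab; apply/ler_normlP; split.
  have := Gm x (set_mem xab); have := ler_norm (- G cm); rewrite normrN.
  by have := normr_ge0 (G cM); lra.
by have := GM x (set_mem xab); have := ler_norm (G cM); have := normr_ge0 (G cm); lra.
Qed.

Section Grid.
Context {R : realType} {a b : R} {n : nat} {t : nat -> R}.
Hypothesis grid : is_grid a b n t.

Local Notation h := (maxstep n t).

Lemma grid_n_gt0 : (0 < n)%N. Proof. by case: grid. Qed.
Lemma grid_t0 : t 0%N = a. Proof. by case: grid => _ []. Qed.
Lemma grid_tn : t n = b. Proof. by case: grid => _ [] _ []. Qed.

Lemma hstep_gt0 {j} : (j < n)%N -> 0 < hstep t j.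
Proof. by case: grid => _ [_ [_ inc]] /inc; rewrite subr_gt0. Qed.

Lemma hstep_le_maxstep {j} : (j < n)%N -> hstep t j <= h.
Proof. by move=> jn; exact: (le_bigmax _ (fun j : 'I_n => hstep t j) (Ordinal jn)). Qed.

Lemma maxstep_gt0 : 0 < h.
Proof. exact: lt_le_trans (hstep_gt0 grid_n_gt0) (hstep_le_maxstep grid_n_gt0). Qed.

Lemma grid_telescope i k : (i <= k)%N -> t k - t i = \sum_(i <= m < k) hstep t m.
Proof. by move=> ik; rewrite telescope_sumr. Qed.

Lemma grid_le i k : (i <= k)%N -> (k <= n)%N -> t i <= t k.
Proof.
move=> ik kn; rewrite -subr_ge0 grid_telescope // big_nat_cond.
rewrite sumr_ge0 // => m /andP[/andP[_ mk] _].
by rewrite ltW // hstep_gt0 // (leq_trans mk).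
Qed.

Lemma grid_mem {j} : (j <= n)%N -> t j \in `[a, b].
Proof. by move=> jn; rewrite mem_set_itvcc -grid_t0 -grid_tn !grid_le. Qed.

Lemma grid_dist_le {i k} : (i <= n)%N -> (k <= n)%N -> `|t i - t k| <= `|i - k|%N%:R * h.
Proof.
wlog ik : i k / (i <= k)%N.
  move=> wlog_ik in_ kn; have [/wlog_ik|/ltnW/wlog_ik] := leqP i k; first exact.
  by rewrite distrC distnC; apply.
move=> _ kn; rewrite distrC ger0_norm ?subr_ge0 ?grid_le // grid_telescope //.
rewrite (_ : `|i - k|%N = (k - i)%N); last by lia.
rewrite mulr_natl -sumr_const_nat big_nat_cond [X in _ <= X]big_nat_cond.
rewrite ler_sum // => m /andP[/andP[_ mk] _].
by rewrite hstep_le_maxstep // (leq_trans mk).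
Qed.

Let cell_prefix {x} : x \in `[a, b] -> forall m, (m < n)%N ->
  let S := (\sum_(1 <= k < m.+1) (t k <= x)%R)%N in
  (S = m /\ t m <= x) \/ [/\ (S < m)%N, t S <= x & x < t S.+1].
Proof.
rewrite mem_set_itvcc => /andP[ax xb].
elim => [|m IH] mn /=; first by left; rewrite big_geq // grid_t0.
rewrite big_nat_recr //=.
have [[-> tm]|[Sm tS xS]] := IH (ltnW mn).
  by have [tmx|xtm] := leP (t m.+1) x; [left|right]; rewrite ?addn1 ?addn0.
set S := (\sum_(_ <= _ < _) _)%N in Sm tS xS *.
have tS1 : t S.+1 <= t m.+1 by apply: grid_le; lia.
have -> : (t m.+1 <= x) = false by apply/negbTE; rewrite -ltNge; lra.
by right; rewrite addn0; split => //; lia.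
Qed.

Lemma cell_spec {x} : x \in `[a, b] ->
  [/\ (cell n t x < n)%N, t (cell n t x) <= x & x <= t (cell n t x).+1].
Proof.
move=> xab; have n_gt0 := grid_n_gt0.
have n1_lt : (n.-1 < n)%N by rewrite prednK.
have := cell_prefix xab _ n1_lt; rewrite prednK // -/(cell n t x).
move: xab; rewrite mem_set_itvcc => /andP[_ xb].
case=> [[-> tx]|[Sm tS /ltW xS]]; last by split => //; lia.
by rewrite prednK // grid_tn; split => //; lia.
Qed.

End Grid.

Section InterpolationError.
Context {R : realType} {a b M : R} {F F1 F2 : R -> R} {n : nat} {t : nat -> R}.
Hypothesis F_cont : {within `[a, b], continuous F}.
Hypothesis F1_cont : {within `[a, b], continuous F1}.
Hypothesis F_deriv : forall x, x \in `]a, b[ -> is_derive x 1 F (F1 x).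
Hypothesis F1_deriv : forall x, x \in `]a, b[ -> is_derive x 1 F1 (F2 x).
Hypothesis F2_bound : forall x, x \in `[a, b] -> `|F2 x| <= M.
Hypothesis grid : is_grid a b n t.

Local Notation h := (maxstep n t).

Let M_ge0 : 0 <= M.
Proof.
have := F2_bound _ (grid_mem grid (leq0n n)); have := normr_ge0 (F2 (t 0%N)); lra.
Qed.

Let Mh_ge0 : 0 <= M * h.
Proof. by rewrite mulr_ge0 // ltW // (maxstep_gt0 grid). Qed.

Lemma secant_node_err {i k d} : (i < n)%N -> (k <= n)%N -> (`|i - k| + `|i.+1 - k| <= d)%N ->
  `|secant t F i - F1 (t k)| <= d%:R * (M * h).
Proof.
move=> i_lt k_le dist_d.
have ti := grid_mem grid (ltnW i_lt); have ti1 := grid_mem grid i_lt.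
have ti_lt : t i < t i.+1 by rewrite -subr_gt0 (hstep_gt0 grid i_lt).
rewrite /secant /hstep.
apply: le_trans (secant_deriv_err F_cont F1_cont F_deriv F1_deriv F2_bound ti ti1
  (grid_mem grid k_le) ti_lt) _.
rewrite mulrCA ler_wpM2l // (le_trans (lerD (grid_dist_le grid (ltnW i_lt) k_le)
  (grid_dist_le grid i_lt k_le))) // -mulrDl -natrD ler_wpM2r ?ler_nat //.
by rewrite ltW // (maxstep_gt0 grid).
Qed.

Lemma pchip_slope_err {j} : (j <= n)%N -> `|pchip_slope n t F j - F1 (t j)| <= 20 * (M * h).
Proof.
move=> j_le; have n_gt0 := grid_n_gt0 grid.
have h_gt0 i (i_lt : (i < n)%N) : 0 < hstep t i := hstep_gt0 grid i_lt.
have sec1 i k : (i < n)%N -> (k <= n)%N -> (`|i - k| + `|i.+1 - k| <= 1)%N ->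
    `|secant t F i - F1 (t k)| <= M * h.
  by move=> i_lt k_le ik; have := secant_node_err i_lt k_le ik; rewrite mul1r.
have le20 : M * h <= 20 * (M * h) by rewrite ler_peMl //; lra.
rewrite /pchip_slope; have [n1|n1] := eqVneq n 1%N.
  by apply/(le_trans (sec1 _ _ _ _ _))/le20; lia.
have [->|j0] := eqVneq j 0%N.
  apply: fc_end_slope_err; [exact: h_gt0|apply: h_gt0; lia|..].
  - by apply: sec1; lia.
  - by apply: secant_node_err; lia.
have [->|jn] := eqVneq j n.
  apply: fc_end_slope_err; [apply: h_gt0; lia|apply: h_gt0; lia|..].
  - by apply: sec1; lia.
  - by apply: secant_node_err; lia.
rewrite /fc_interior_slope /=; apply: le_trans le20.
have h0_gt0 : 0 < hstep t j.-1 by apply: h_gt0; lia.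
have h1_gt0 : 0 < hstep t j by apply: h_gt0; lia.
by apply: fc_mean_err; [lra|lra|apply: sec1; lia|apply: sec1; lia].
Qed.

Lemma interp_err s x : x \in `[a, b] -> `|interp s n t F x - F x| <= 44 * M * h ^+ 2.
Proof.
move=> xab; have [j_lt tj_x x_tj1] := cell_spec grid xab.
set j := cell n t x in j_lt tj_x x_tj1 *; set hj := hstep t j.
have hj_gt0 : 0 < hj := hstep_gt0 grid j_lt.
have hj_le : hj <= h := hstep_le_maxstep j_lt.
have tj := grid_mem grid (ltnW j_lt); have tj1 := grid_mem grid j_lt.
set u := (x - t j) / hj.
have u_hj : u * hj = x - t j by rewrite /u divfK // gt_eqF.
have u01 : 0 <= u <= 1.
  apply/andP; split; first by apply: divr_ge0; [rewrite subr_ge0|exact: ltW].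
  by rewrite ler_pdivrMr // mul1r /hj /hstep; lra.
have r_le : M * hj ^+ 2 <= M * h ^+ 2.
  by rewrite ler_wpM2l // !expr2; apply: ler_pM => //; exact: ltW.
have r1 : `|F (t j.+1) - F (t j) - F1 (t j) * hj| <= M * h ^+ 2.
  exact: le_trans (taylor1_err F_cont F1_cont F_deriv F1_deriv F2_bound tj tj1) r_le.
have r2 : `|F x - F (t j) - F1 (t j) * (u * hj)| <= M * h ^+ 2.
  rewrite u_hj; apply: le_trans (taylor1_err F_cont F1_cont F_deriv F1_deriv F2_bound tj xab) _.
  apply: le_trans r_le; rewrite ler_wpM2l // !expr2.
  by apply: ler_pM; rewrite ?subr_ge0 // /hj /hstep; lra.
case: s => /=.
  rewrite /pwlinear -/j -/hj -/u; apply: le_trans (linear_cell_err u01 r1 r2) _.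
  by rewrite -mulrA ler_wpM2r ?mulr_ge0 ?sqr_ge0 //; lra.
have m0 : `|pchip_slope n t F j - F1 (t j)| <= 21 * (M * h).
  by apply: le_trans (pchip_slope_err (ltnW j_lt)) _; rewrite ler_wpM2r //; lra.
have m1 : `|pchip_slope n t F j.+1 - F1 (t j)| <= 21 * (M * h).
  have e1 := pchip_slope_err j_lt.
  have e2 : `|F1 (t j.+1) - F1 (t j)| <= M * h.
    apply: le_trans (deriv_bound_lipschitz F1_cont F1_deriv F2_bound tj tj1) _.
    by rewrite ler_wpM2l // ger0_norm // ltW.
  have := ler_normD (pchip_slope n t F j.+1 - F1 (t j.+1)) (F1 (t j.+1) - F1 (t j)).
  by rewrite addrA subrK; lra.
rewrite /pchip -/j -/hj -/u; apply: le_trans (hermite_cell_err u01 (ltW hj_gt0) r1 r2 m0 m1) _.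
have : hj * (M * h) <= M * h ^+ 2 by rewrite mulrC expr2 mulrA ler_wpM2l.
lra.
Qed.

Lemma interp_err_order s x : h <= 1 -> x \in `[a, b] ->
  `|interp s n t F x - F x| <= 44 * M * h ^+ scheme_order s.
Proof.
move=> h_le1 xab; apply: le_trans (interp_err s x xab) _.
rewrite -!mulrA !ler_wpM2l //; case: s => //=.
by rewrite expr2 expr1 ler_piMr // ltW // (maxstep_gt0 grid).
Qed.

End InterpolationError.

Section Measurability.
Context {d : measure_display} {T : measurableType d}.

Lemma measurable_count_eq (P : nat -> T -> bool) (r : seq nat) (j : nat) :
  (forall k, measurable [set x | P k x]) ->
  measurable [set x | (\sum_(k <- r) P k x)%N = j].
Proof.
move=> mP; elim: r j => [|i r IH] j.
  have [<-|j0] := eqVneq 0%N j.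
    by rewrite (_ : [set _ | _] = setT) //; apply/seteqP; split => x //=; rewrite big_nil.
  rewrite (_ : [set _ | _] = set0) //; apply/seteqP; split => x //=.
  by rewrite big_nil => /eqP; rewrite (negPf j0).
case: j => [|j].
  rewrite (_ : [set _ | _] = ~` [set x | P i x] `&` [set x | (\sum_(k <- r) P k x)%N = 0%N]).
    by apply: measurableI => //; apply: measurableC.
  apply/seteqP; split => x /=; rewrite big_cons.
    by case: (P i x).
  by case: (P i x) => -[] //= _; rewrite add0n.
rewrite (_ : [set _ | _] =
    ([set x | P i x] `&` [set x | (\sum_(k <- r) P k x)%N = j]) `|`
    (~` [set x | P i x] `&` [set x | (\sum_(k <- r) P k x)%N = j.+1])).
  by apply: measurableU; apply: measurableI => //; apply: measurableC.
apply/seteqP; split => x /=; rewrite big_cons.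
  by case: (P i x) => /= [[]|]; [left|right].
by case=> -[+ ->]; case: (P i x).
Qed.

Lemma measurable_fun_glue {d'} {U : measurableType d'} (c : T -> nat) (g : nat -> T -> U) :
  (forall j, measurable [set x | c x = j]) -> (forall j, measurable_fun setT (g j)) ->
  measurable_fun setT (fun x => g (c x) x).
Proof.
move=> mc mg _ B mB; rewrite setTI.
rewrite (_ : _ @^-1` B = \bigcup_j ([set x | c x = j] `&` (g j @^-1` B))).
  by apply: bigcupT_measurable => j; rewrite -[_ @^-1` _]setTI; apply: measurableI; [|apply: mg].
by apply/seteqP; split => [x Bx|x [j _ [<-]]] //; exists (c x).
Qed.

End Measurability.

Local Ltac measurable_arith :=
  repeat first [ apply: measurable_funD | apply: measurable_funB | apply: measurable_funM
               | apply: measurable_funN | apply: measurable_funX | exact: measurable_cst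
               | exact: measurable_id ].

Section InterpolantMeasurability.
Context {R : realType}.

Lemma measurable_cell_eq n (t : nat -> R) j : measurable [set x : R | cell n t x = j].
Proof.
apply: measurable_count_eq => k.
by rewrite (_ : [set x | _] = `[t k, +oo[%classic); last by apply/seteqP; split => x;
  rewrite /= in_itv /= andbT.
Qed.

Lemma measurable_interp s n (t : nat -> R) F : measurable_fun setT (interp s n t F).
Proof.
case: s => /=.
  apply: (measurable_fun_glue (cell n t)
    (fun j x => F (t j) + (x - t j) / hstep t j * (F (t j.+1) - F (t j))));
    first exact: measurable_cell_eq.
  by move=> j; measurable_arith.
apply: (measurable_fun_glue (cell n t) (fun j x => let u := (x - t j) / hstep t j in
  (2 * u ^+ 3 - 3 * u ^+ 2 + 1) * F (t j)
  + (u ^+ 3 - 2 * u ^+ 2 + u) * hstep t j * pchip_slope n t F j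
  + (- 2 * u ^+ 3 + 3 * u ^+ 2) * F (t j.+1)
  + (u ^+ 3 - u ^+ 2) * hstep t j * pchip_slope n t F j.+1));
  first exact: measurable_cell_eq.
by move=> j; cbv zeta; measurable_arith.
Qed.

Lemma clamp_mem {a b : R} x : a <= b -> clamp a b x \in `[a, b].
Proof. by move=> ab; rewrite mem_set_itvcc le_min ab le_max lexx orbT ge_min lexx orbT. Qed.

Lemma measurable_clampext {a b : R} {G : R -> R} : a <= b -> measurable_fun `[a, b] G ->
  measurable_fun setT (clampext a b G).
Proof.
move=> ab mG; apply: (measurable_comp (F := `[a, b]) (f := G) (g := clamp a b)) => //.
  by move=> _ [x _ <-]; exact/set_mem/clamp_mem.
rewrite (_ : clamp a b = ((id \max cst a) \min cst b)%R) //.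
by apply/measurable_minr/measurable_cst/measurable_maxr/measurable_cst/measurable_id.
Qed.

End InterpolantMeasurability.

Section PlanarNorm.
Context {R : rcfType}.

Lemma dot2_le_sqrt (A B P Q g : R) : 0 <= g -> P ^+ 2 + Q ^+ 2 <= g ^+ 2 ->
  A * P + B * Q <= Num.sqrt (A ^+ 2 + B ^+ 2) * g.
Proof.
move=> g_ge0 PQg; set r := Num.sqrt _.
have r_ge0 : 0 <= r := sqrtr_ge0 _.
have r2 : r ^+ 2 = A ^+ 2 + B ^+ 2 by rewrite sqr_sqrtr // addr_ge0 ?sqr_ge0.
have cauchy_schwarz : (A * P + B * Q) ^+ 2 <= (A ^+ 2 + B ^+ 2) * (P ^+ 2 + Q ^+ 2).
  by rewrite -subr_ge0 (_ : _ - _ = (A * Q - B * P) ^+ 2) ?sqr_ge0 //; ring.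
have : (A * P + B * Q) ^+ 2 <= (r * g) ^+ 2.
  by rewrite exprMn r2 (le_trans cauchy_schwarz) // ler_wpM2l // addr_ge0 ?sqr_ge0.
have rg_ge0 : 0 <= r * g := mulr_ge0 r_ge0 g_ge0.
rewrite !expr2; nra.
Qed.

Lemma rotation_sub_sqr_le (e co si d1 d0 S : R) : 0 <= e -> co ^+ 2 + si ^+ 2 = 1 ->
  `|d1| <= S -> `|d0| <= S -> (e * co * d1 - d0) ^+ 2 + (e * si * d1) ^+ 2 <= (S * e + S) ^+ 2.
Proof.
move=> e_ge0 cs /ler_normlP[d1a d1b] /ler_normlP[d0a d0b].
have -> : (e * co * d1 - d0) ^+ 2 + (e * si * d1) ^+ 2
    = e ^+ 2 * d1 ^+ 2 * (co ^+ 2 + si ^+ 2) - 2 * e * (co * d1 * d0) + d0 ^+ 2 by ring.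
have co_le1 : `|co| <= 1.
  by rewrite -(ler_pXn2r (_ : 0 < 2)%N) ?nnegrE // expr1n real_normK ?num_real //; nra.
have /ler_normlP[c1 c2] : `|co * d1 * d0| <= S * S.
  rewrite !normrM -[S * S]mul1r -mulrA; apply: ler_pM => //.
  by apply: ler_pM => //; apply/ler_normlP; split; lra.
have S_ge0 : 0 <= S by lra.
have d1S : d1 * d1 <= S * S by nra.
have d0S : d0 * d0 <= S * S by nra.
have ed1S : e * e * (d1 * d1) <= e * e * (S * S) by rewrite ler_wpM2l ?mulr_ge0.
have ecS : - (e * (co * d1 * d0)) <= e * (S * S) by rewrite -mulrN ler_wpM2l //; lra.
rewrite cs mulr1 !expr2; lra.
Qed.

End PlanarNorm.

Section IntegralPlanarNorm.
Context {d : measure_display} {T : measurableType d} {R : realType}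
  {mu : {measure set T -> \bar R}} {D : set T}.
Hypothesis mD : measurable D.

Lemma Rintegral_planar_norm_le {P Q g : T -> R} :
  mu.-integrable D (EFin \o P) -> mu.-integrable D (EFin \o Q) ->
  mu.-integrable D (EFin \o g) ->
  (forall x, D x -> 0 <= g x) -> (forall x, D x -> P x ^+ 2 + Q x ^+ 2 <= g x ^+ 2) ->
  Num.sqrt ((\int[mu]_(x in D) P x) ^+ 2 + (\int[mu]_(x in D) Q x) ^+ 2)
    <= \int[mu]_(x in D) g x.
Proof.
move=> iP iQ ig g_ge0 PQg.
set A := \int[mu]_(x in D) P x; set B := \int[mu]_(x in D) Q x; set r := Num.sqrt _.
have Ig_ge0 : 0 <= \int[mu]_(x in D) g x by apply: Rintegral_ge0.
have [r0|r_neq0] := eqVneq r 0; first by rewrite r0.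
have r_gt0 : 0 < r by rewrite lt_def r_neq0 sqrtr_ge0.
have iZ (k : R) f : mu.-integrable D (EFin \o f) -> mu.-integrable D (EFin \o (fun x => k * f x)).
  by move=> i_f; apply: (eq_integrable mD _ _ _ (integrableZl mD k i_f)) => x _ /=; rewrite EFinM.
have iPQ : mu.-integrable D (EFin \o (fun x => A * P x + B * Q x)).
  by apply: (eq_integrable mD _ _ _ (integrableD mD (iZ A _ iP) (iZ B _ iQ))) => x _ /=;
    rewrite EFinD.
(* [r ^+ 2] is the integral of [A * P + B * Q], which Cauchy-Schwarz bounds by [r * g]. *)
have : r ^+ 2 <= r * \int[mu]_(x in D) g x.
  rewrite sqr_sqrtr ?addr_ge0 ?sqr_ge0 // -RintegralZl //.
  rewrite !expr2 -(RintegralZl A mD iP) -(RintegralZl B mD iQ) -RintegralD ?iZ //.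
  by apply: le_Rintegral => // [|x Dx]; [exact: iZ|exact: dot2_le_sqrt (g_ge0 x Dx) (PQg x Dx)].
by rewrite expr2 ler_pM2l.
Qed.

End IntegralPlanarNorm.

Lemma cmod_real_scale {R : realType} (l A B : R) : 0 <= l ->
  cmod (l%:C * (A +i* B))%C = l * Num.sqrt (A ^+ 2 + B ^+ 2).
Proof.
move=> l_ge0; rewrite /cmod /= (_ : _ + _ = l ^+ 2 * (A ^+ 2 + B ^+ 2)); last by ring.
by rewrite sqrtrM ?sqr_ge0 // sqrtr_sqr ger0_norm.
Qed.

Section ExpKernelOperator.
Context {R : realType} {a b beta : R} {eta : R[i]} {nu : R -> {measure set R -> \bar R}}
  {lam : R}.
Hypothesis ab : a <= b.
Local Notation Dp := (`]0%R, +oo[ : set R).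
Local Notation mu := (nu lam).
Local Notation E x := (expR (complex.Re eta * x)).
Hypothesis mu_Dp : mu Dp = 1%E.
Hypothesis E_int : mu.-integrable Dp (EFin \o (fun x => E x)).

Let mDp : measurable Dp := measurable_itv _.

Let mE : measurable_fun setT (fun x => E x).
Proof. by apply: measurableT_comp; [exact: measurable_expR|exact: measurable_funM]. Qed.

Let Nre G x :=
  E x * cos (complex.Im eta * x) * clampext a b G (lam + beta * x) - clampext a b G lam.
Let Nim G x := E x * sin (complex.Im eta * x) * clampext a b G (lam + beta * x).

Lemma Nexp_parts (G : R -> R) :
  Nexp a b beta eta nu G lam
  = (lam%:C * ((\int[mu]_(x in Dp) Nre G x) +i* (\int[mu]_(x in Dp) Nim G x)))%C.
Proof.
rewrite /Nexp /cintegral; congr (_ * (_ +i* _))%C.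
  by apply: eq_Rintegral => x _; rewrite /Nre /=; ring.
by apply: eq_Rintegral => x _; rewrite /Nim /=; ring.
Qed.

Lemma integrable_exp_dominated (f : R -> R) S : measurable_fun Dp f ->
  (forall x, Dp x -> `|f x| <= S * E x + S) -> mu.-integrable Dp (EFin \o f).
Proof.
move=> mf fS; apply: (le_integrable mDp (g := EFin \o (fun x => S * E x + S))).
- exact/measurable_EFinP.
- by move=> x Dx /=; rewrite lee_fin (le_trans (fS x Dx)) // ler_norm.
apply: (eq_integrable mDp _ _ _ (integrableD mDp (integrableZl mDp S E_int) _)).
  by move=> x _ /=; rewrite EFinD EFinM.
by apply: measurable_bounded_integrable => //; [rewrite mu_Dp ltry|exact: bounded_cst].
Qed.

Lemma integrable_Nexp_parts {G : R -> R} {S : R} : measurable_fun `[a, b] G ->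
  (forall y, y \in `[a, b] -> `|G y| <= S) ->
  mu.-integrable Dp (EFin \o Nre G) /\ mu.-integrable Dp (EFin \o Nim G).
Proof.
move=> mG GS; have GS' y : `|clampext a b G y| <= S := GS _ (clamp_mem y ab).
have mGc := measurable_clampext ab mG.
have mG_aff : measurable_fun setT (fun x => clampext a b G (lam + beta * x)).
  apply: (measurableT_comp (f := clampext a b G) (g := fun x => lam + beta * x)) => //.
  by apply: measurable_funD => //; exact: measurable_funM.
have mtrig (f : R -> R) : continuous f -> measurable_fun setT (fun x => f (complex.Im eta * x)).
  move=> f_cont; apply: measurableT_comp; last exact: measurable_funM.
  exact: continuous_measurable_fun.
split; apply: (integrable_exp_dominated _ S).
- apply: (measurable_funS (E := setT)) => //; apply: measurable_funB => //.
  by apply: measurable_funM => //; apply: measurable_funM => //; exact: mtrig _ (@continuous_cos R).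
- move=> x _; rewrite (le_trans (ler_normB _ _)) // lerD //.
  rewrite -mulrA normrM ger0_norm ?expR_ge0 // mulrC ler_wpM2r ?expR_ge0 // normrM.
  by rewrite -[S]mul1r ler_pM ?normr_ge0 ?cos_max.
- apply: (measurable_funS (E := setT)) => //.
  by apply: measurable_funM => //; apply: measurable_funM => //; exact: mtrig _ (@continuous_sin R).
- move=> x _; apply: le_trans (_ : _ <= S * E x) _; last first.
    by rewrite lerDl (le_trans _ (GS' lam)).
  rewrite /Nim -mulrA normrM ger0_norm ?expR_ge0 // mulrC ler_wpM2r ?expR_ge0 // normrM.
  by rewrite -[S]mul1r ler_pM ?normr_ge0 ?sin_max.
Qed.

Lemma NexpB {G1 G2 : R -> R} {S1 S2 : R} :
  measurable_fun `[a, b] G1 -> measurable_fun `[a, b] G2 ->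
  (forall y, y \in `[a, b] -> `|G1 y| <= S1) -> (forall y, y \in `[a, b] -> `|G2 y| <= S2) ->
  (Nexp a b beta eta nu G1 lam - Nexp a b beta eta nu G2 lam
   = Nexp a b beta eta nu (fun y => G1 y - G2 y) lam)%C.
Proof.
move=> mG1 mG2 G1S G2S.
have [iP1 iQ1] := integrable_Nexp_parts mG1 G1S.
have [iP2 iQ2] := integrable_Nexp_parts mG2 G2S.
rewrite !Nexp_parts -mulrBr; congr (_ * (_ +i* _))%C.
  by rewrite -RintegralB //; apply: eq_Rintegral => x _; rewrite /Nre /clampext; ring.
by rewrite -RintegralB //; apply: eq_Rintegral => x _; rewrite /Nim /clampext; ring.
Qed.

Lemma cmod_Nexp_le {G : R -> R} {S : R} : 0 <= lam -> measurable_fun `[a, b] G ->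
  (forall y, y \in `[a, b] -> `|G y| <= S) ->
  cmod (Nexp a b beta eta nu G lam) <= lam * (S * (\int[mu]_(x in Dp) E x + 1)).
Proof.
move=> lam_ge0 mG GS; have [iP iQ] := integrable_Nexp_parts mG GS.
have GS' y : `|clampext a b G y| <= S := GS _ (clamp_mem y ab).
have S_ge0 : 0 <= S := le_trans (normr_ge0 _) (GS' 0).
have SE_ge0 x : 0 <= S * E x := mulr_ge0 S_ge0 (expR_ge0 _).
have iE : mu.-integrable Dp (EFin \o (fun x => S * E x)).
  apply: (integrable_exp_dominated _ S); first exact: measurable_funS (measurable_funM _ mE).
  by move=> x _; rewrite ger0_norm // lerDl.
have iS : mu.-integrable Dp (EFin \o (fun=> S)).
  apply: (integrable_exp_dominated _ S); first exact: measurable_cst.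
  by move=> x _; rewrite ger0_norm // lerDr.
have ig : mu.-integrable Dp (EFin \o (fun x => S * E x + S)).
  apply: (integrable_exp_dominated _ S).
    exact: measurable_funD (measurable_funS _ _ (measurable_funM _ mE)) _.
  by move=> x _; rewrite ger0_norm ?addr_ge0.
rewrite Nexp_parts cmod_real_scale // ler_wpM2l //.
apply: le_trans (Rintegral_planar_norm_le mDp iP iQ ig _ _) _.
- by move=> x _; rewrite addr_ge0.
- by move=> x _; apply: rotation_sub_sqr_le; rewrite ?expR_ge0 ?cos2Dsin2.
by rewrite RintegralD // RintegralZl // Rintegral_cst // mu_Dp mulr1 mulrDr mulr1.
Qed.

End ExpKernelOperator.

Lemma ereal_sup_itv_fin {R : realType} (a b B : R) (f : R -> \bar R) : a <= b ->
  (forall x, x \in `[a, b] -> (0 <= f x <= B%:E)%E) ->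
  exists C : R, ereal_sup [set f x | x in `[a, b]] = C%:E /\
    forall x, x \in `[a, b] -> (f x <= C%:E)%E.
Proof.
move=> ab fB; set S := ereal_sup _.
have f_le_S x : x \in `[a, b] -> (f x <= S)%E.
  by move=> xab; apply: ereal_sup_ubound; exists x => //; exact: set_mem.
have a_mem : a \in `[a, b] by rewrite mem_set_itvcc lexx ab.
have S_ge0 : (0 <= S)%E by have /andP[f0 _] := fB a a_mem; exact: le_trans f0 (f_le_S a a_mem).
have S_le : (S <= B%:E)%E.
  by apply: ge_ereal_sup => _ [x xab <-]; have /andP[_ ->] := fB x (mem_set xab).
have S_fin : S \is a fin_num by rewrite ge0_fin_numE // (le_lt_trans S_le) ?ltry.
by exists (fine S); rewrite fineK.
Qed.

Lemma supnorm_le {R : realType} {a b K : R} {G : R -> R} :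
  (forall x, x \in `[a, b] -> `|G x| <= K) -> (supnorm a b G <= K%:E)%E.
Proof. by move=> GK; apply: ge_ereal_sup => _ [x xab <-]; rewrite lee_fin GK // mem_set. Qed.

Lemma supnorm_fin {R : realType} {a b K : R} {G : R -> R} : a <= b ->
  (forall x, x \in `[a, b] -> `|G x| <= K) ->
  exists S : R, supnorm a b G = S%:E /\ forall x, x \in `[a, b] -> `|G x| <= S.
Proof.
move=> ab GK; have [S [SE S_ub]] := ereal_sup_itv_fin _ _ _ (fun x => (`|G x|)%:E) ab
  (fun x xab => introT andP (conj (normr_ge0 _) (GK x xab))).
by exists S; split => // x /S_ub; rewrite lee_fin.
Qed.

Section ExponentialMoments.
Context {R : realType} {mu : {measure set R -> \bar R}}.
Local Notation Dp := (`]0%R, +oo[ : set R).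

Let measurable_expR_lin (c : R) : measurable_fun Dp (fun x : R => expR (c * x)).
Proof.
apply: (measurable_funS (E := setT)) => //.
by apply: measurableT_comp; [exact: measurable_expR|exact: measurable_funM].
Qed.

Lemma integral_expR_le (c c' : R) : c <= c' ->
  (\int[mu]_(x in Dp) (expR (c * x))%:E <= \int[mu]_(x in Dp) (expR (c' * x))%:E)%E.
Proof.
move=> cc'; apply: ge0_le_integral => //.
- by apply/measurable_EFinP; exact: measurable_expR_lin.
- by apply/measurable_EFinP; exact: measurable_expR_lin.
by move=> x; rewrite /= in_itv /= andbT => x_gt0; rewrite lee_fin ler_expR ler_wpM2r // ltW.
Qed.

Lemma integrable_expR_Rintegral_le {c C : R} :
  (\int[mu]_(x in Dp) (expR (c * x))%:E <= C%:E)%E ->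
  mu.-integrable Dp (EFin \o (fun x => expR (c * x))) /\ \int[mu]_(x in Dp) expR (c * x) <= C.
Proof.
move=> IC; have I_ge0 : (0 <= \int[mu]_(x in Dp) (expR (c * x))%:E)%E.
  by apply: integral_ge0 => x _; rewrite lee_fin expR_ge0.
have I_fin : (\int[mu]_(x in Dp) (expR (c * x))%:E)%E \is a fin_num.
  by rewrite ge0_fin_numE // (le_lt_trans IC) ?ltry.
split; last by rewrite -lee_fin /Rintegral fineK.
apply/integrableP; split; first by apply/measurable_EFinP; exact: measurable_expR_lin.
under eq_integral do rewrite /= ger0_norm ?expR_ge0 //.
by rewrite -ge0_fin_numE.
Qed.

End ExponentialMoments.

Lemma exp_moment_sup_fin {R : realType} {a b s0 delta : R} {nu : R -> {measure set R -> \bar R}} :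
  a <= b -> 0 < s0 -> delta < s0 ->
  (forall s', 0 <= s' < s0 -> exists M : R, forall lam, lam \in `[a, b] ->
     (\int[nu lam]_(x in `]0%R, +oo[) (expR (s' * x))%:E <= M%:E)%E) ->
  exists C : R,
    ereal_sup [set (\int[nu lam]_(x in `]0%R, +oo[) (expR (delta * x))%:E)%E | lam in `[a, b]]
      = C%:E /\
    forall lam, lam \in `[a, b] ->
      (nu lam).-integrable `]0%R, +oo[ (EFin \o (fun x => expR (delta * x))) /\
      \int[nu lam]_(x in `]0%R, +oo[) expR (delta * x) <= C.
Proof.
move=> ab s0_gt0 delta_lt moments.
have [B moment_B] : exists B : R, forall lam, lam \in `[a, b] ->
    (\int[nu lam]_(x in `]0%R, +oo[) (expR (Num.max delta 0 * x))%:E <= B%:E)%E.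
  by apply: moments; rewrite le_max lexx orbT gt_max delta_lt s0_gt0.
have moment_bound lam : lam \in `[a, b] ->
    (0 <= \int[nu lam]_(x in `]0%R, +oo[) (expR (delta * x))%:E <= B%:E)%E.
  move=> lam_mem; rewrite integral_ge0 => [|x _]; last by rewrite lee_fin expR_ge0.
  by rewrite (le_trans _ (moment_B lam lam_mem)) // integral_expR_le // le_max lexx.
have [C [CE C_ub]] := ereal_sup_itv_fin _ _ _
    (fun lam => \int[nu lam]_(x in `]0%R, +oo[) (expR (delta * x))%:E)%E ab moment_bound.
by exists C; split => // lam /C_ub /integrable_expR_Rintegral_le.
Qed.

Lemma csupnorm_NexpB_le {R : realType} (a b beta C B S : R) (eta : R[i])
    (nu : R -> {measure set R -> \bar R}) (G1 G2 : R -> R) :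
  0 <= a -> a <= b ->
  (forall lam, lam \in `[a, b] -> nu lam `]0%R, +oo[ = 1%E) ->
  (forall lam, lam \in `[a, b] ->
     (nu lam).-integrable `]0%R, +oo[ (EFin \o (fun x => expR (complex.Re eta * x))) /\
     \int[nu lam]_(x in `]0%R, +oo[) expR (complex.Re eta * x) <= C) ->
  measurable_fun `[a, b] G1 -> measurable_fun `[a, b] G2 ->
  (forall y, y \in `[a, b] -> `|G2 y| <= B) ->
  (forall y, y \in `[a, b] -> `|G1 y - G2 y| <= S) ->
  (csupnorm a b (fun lam => Nexp a b beta eta nu G1 lam - Nexp a b beta eta nu G2 lam)%R
    <= (b * (C + 1) * S)%:E)%E.
Proof.
move=> a_ge0 ab nu1 moment mG1 mG2 G2_bound G12_bound.
have G1_bound y : y \in `[a, b] -> `|G1 y| <= S + B.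
  move=> y_mem; rewrite -[G1 y](subrK (G2 y)).
  by rewrite (le_trans (ler_normD _ _)) // lerD ?G12_bound ?G2_bound.
apply: ge_ereal_sup => _ [lam lam_mem <-]; rewrite lee_fin.
have lam_in := mem_set lam_mem; move: lam_mem; rewrite /= in_itv /= => /andP[a_le lam_le].
have [E_int E_le] := moment lam lam_in.
rewrite (NexpB ab (nu1 lam lam_in) E_int mG1 mG2 G1_bound G2_bound).
apply: le_trans (cmod_Nexp_le ab (nu1 lam lam_in) E_int _ (measurable_funB mG1 mG2) G12_bound) _.
  lra.
have S_ge0 : 0 <= S := le_trans (normr_ge0 _) (G12_bound _ lam_in).
have I_ge0 : 0 <= \int[nu lam]_(x in `]0%R, +oo[) expR (complex.Re eta * x).
  by apply: Rintegral_ge0 => x _; exact: expR_ge0.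
rewrite -mulrA; apply: ler_pM; rewrite ?mulr_ge0 ?addr_ge0 //; try lra.
by rewrite mulrC ler_wpM2r // lerD2r.
Qed.

Theorem mainTheorem13 (R : realType) (lmin lmax beta s0 : R)
    (nu : R.-pker R ~> R) (eta : R[i]) (F : R -> R) (s : scheme) :
  0 <= lmin -> lmin < lmax -> 0 <= beta -> 0 < s0 ->
  (forall lam, lam \in `[lmin, lmax] -> nu lam `]0%R, +oo[ = 1%E) ->
  (forall s', 0 <= s' < s0 -> exists M : R, forall lam, lam \in `[lmin, lmax] ->
     (\int[nu lam]_(x in `]0%R, +oo[) (expR (s' * x))%:E <= M%:E)%E) ->
  complex.Re eta < s0 ->
  C2_on lmin lmax F ->
  let Cstar := ereal_sup [set (\int[nu lam]_(x in `]0%R, +oo[) (expR (complex.Re eta * x))%:E)%E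
                          | lam in `[lmin, lmax]] in
  (Cstar < +oo)%E /\
  (forall (n : nat) (t : nat -> R), is_grid lmin lmax n t ->
     (csupnorm lmin lmax
        (fun lam => (Nexp lmin lmax beta eta nu (interp s n t F) lam
                     - Nexp lmin lmax beta eta nu F lam)%R)
      <= lmax%:E * (Cstar + 1%E) * supnorm lmin lmax (fun x => (interp s n t F x - F x)%R))%E) /\
  (exists (K h0 : R), 0 < h0 /\
     forall (n : nat) (t : nat -> R), is_grid lmin lmax n t -> maxstep n t <= h0 ->
       (supnorm lmin lmax (fun x => (interp s n t F x - F x)%R)
        <= (K * maxstep n t ^+ scheme_order s)%:E)%E).
Proof.
move=> lmin_ge0 lmin_lt _ s0_gt0 nu1 moments Re_lt
  [F1 [F2 [F_cont F1_cont F2_cont F_deriv F1_deriv]]].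
have ab := ltW lmin_lt.
have [M F2_bound] := bounded_on_itv F2_cont.
have [BF F_bound] := bounded_on_itv F_cont.
have [C [CE moment_C]] := exp_moment_sup_fin ab s0_gt0 Re_lt moments.
have err n t (grid : is_grid lmin lmax n t) :=
  interp_err_order F_cont F1_cont F_deriv F1_deriv F2_bound grid.
rewrite CE; split; first exact: ltry.
split=> [n t grid|]; last first.
  by exists (44 * M), 1; split => // n t grid h_le1; apply: supnorm_le => x /err; apply.
have [S [-> S_bound]] :=
  supnorm_fin ab (interp_err F_cont F1_cont F_deriv F1_deriv F2_bound grid s).
rewrite -EFinD -!EFinM; apply: csupnorm_NexpB_le F_bound S_bound => //.
- by apply: (measurable_funS (E := setT)) => //; exact: measurable_interp.
- exact: subspace_continuous_measurable_fun.
Qed.
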